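(* Let $p\ge 2$, let $\boldsymbol{S}$ be a $p\times p$ symmetric positive semidefinite matrix, let $\rho>0$, and let $k$ be an integer with $0\le k\le \binom{p}{2}$. For positive definite $\boldsymbol{\Sigma}$ put $f(\boldsymbol{\Sigma})=\ln\det\boldsymbol{\Sigma}+\mathrm{tr}(\boldsymbol{\Sigma}^{-1}\boldsymbol{S})$ and $h_\rho(\boldsymbol{\Sigma})=f(\boldsymbol{\Sigma})+\frac{\rho}{2}\mathrm{dist}(\boldsymbol{\Sigma},\mathcal{C})^2$, where $\mathcal{C}=\{\boldsymbol{A}\in\mathbb{R}^{p\times p}:\boldsymbol{A}=\boldsymbol{A}^T,\ \|\boldsymbol{A}\|_0\le 2k+p\}$ and $\mathrm{dist}$ is Frobenius distance. Let $\boldsymbol{\Sigma}_k\succ\boldsymbol{0}$, let $\boldsymbol{\Theta}_k\in P_{\mathcal{C}}(\boldsymbol{\Sigma}_k)$, and let $\widehat{\boldsymbol{\Sigma}}$ be the unique solution of the Sylvester equation $$\rho\,\widehat{\boldsymbol{\Sigma}}+\boldsymbol{\Sigma}_k^{-1}\widehat{\boldsymbol{\Sigma}}\boldsymbol{\Sigma}_k^{-1}=\rho\,\boldsymbol{\Theta}_k+\boldsymbol{\Sigma}_k^{-1}\boldsymbol{S}\boldsymbol{\Sigma}_k^{-1}.$$ If $\boldsymbol{\Sigma}_k$ is not a stationary point of $h_\rho$, then there exists an integer $s\ge 0$ such that $\boldsymbol{\Sigma}_{k+1}=\boldsymbol{\Sigma}_k+2^{-s}(\widehat{\boldsymbol{\Sigma}}-\boldsymbol{\Sigma}_k)$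 satisfies $\boldsymbol{\Sigma}_{k+1}\succ\boldsymbol{0}$ and $h_\rho(\boldsymbol{\Sigma}_{k+1})<h_\rho(\boldsymbol{\Sigma}_k)$.
   Context: $\|\boldsymbol{A}\|_0$ is the number of nonzero entries of $\boldsymbol{A}$. $P_{\mathcal{C}}(\boldsymbol{\Sigma})$ denotes the (possibly multi-valued) set of Frobenius-nearest points of $\mathcal{C}$ to $\boldsymbol{\Sigma}$ (obtained by keeping the diagonal and the $k$ largest-magnitude upper-triangular entries, mirrored symmetrically, and zeroing the rest). $\widehat{\boldsymbol{\Sigma}}$ is the minimizer of the quadratic surrogate $q_\rho(\boldsymbol{\Sigma}\mid\boldsymbol{\Sigma}_k)=f(\boldsymbol{\Sigma}_k)+\mathrm{tr}[\boldsymbol{\Sigma}_k^{-1}(\boldsymbol{\Sigma}-\boldsymbol{\Sigma}_k)]-\mathrm{tr}[\boldsymbol{\Sigma}_k^{-1}\boldsymbol{S}\boldsymbol{\Sigma}_k^{-1}(\boldsymbol{\Sigma}-\boldsymbol{\Sigma}_k)]+\frac12\mathrm{tr}[\boldsymbol{\Sigma}_k^{-1}(\boldsymbol{\Sigma}-\boldsymbol{\Sigma}_k)\boldsymbol{\Sigma}_k^{-1}(\boldsymbol{\Sigma}-\boldsymbol{\Sigma}_k)]+\frac{\rho}{2}\|\boldsymbol{\Sigma}-\boldsymbol{\Theta}_k\|_F^2$. A positive definite $\boldsymbol{\Sigma}$ is called a stationary point of $h_\rho$ if $\boldsymbol{\Sigma}^{-1}-\boldsymbol{\Sigma}^{-1}\boldsymbol{S}\boldsymbol{\Sigma}^{-1}+\rho(\boldsymbol{\Sigma}-\boldsymbol{\Theta})=\boldsymbol{0}$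 for some $\boldsymbol{\Theta}\in P_{\mathcal{C}}(\boldsymbol{\Sigma})$. *)

From HB Require Import structures.
From mathcomp Require Import all_boot all_order all_algebra.
From mathcomp Require Import all_classical all_reals all_analysis.
Set Implicit Arguments. Unset Strict Implicit. Unset Printing Implicit Defensive.
Import Order.TTheory GRing.Theory Num.Theory.
Local Open Scope ring_scope.
Local Open Scope classical_set_scope.

Section Defs.
Variable R : realType.
Variable p : nat.

Definition posdef (A : 'M[R]_p) : Prop :=
  A^T = A /\ forall x : 'cV[R]_p, x != 0 -> 0 < (x^T *m A *m x) 0 0.

Definition psd (A : 'M[R]_p) : Prop :=
  A^T = A /\ forall x : 'cV[R]_p, 0 <= (x^T *m A *m x) 0 0.

Definition nnz (A : 'M[R]_p) : nat :=
  #|[set ij : 'I_p * 'I_p | A ij.1 ij.2 != 0]|.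

Definition frob2 (A : 'M[R]_p) : R := \sum_i \sum_j (A i j) ^+ 2.
Definition frob (A : 'M[R]_p) : R := Num.sqrt (frob2 A).

Definition Cset (k : nat) : set 'M[R]_p :=
  [set A | A^T = A /\ (nnz A <= 2 * k + p)%N].

Definition distC (k : nat) (Sg : 'M[R]_p) : R :=
  inf [set frob (Sg - A) | A in Cset k].

Definition projC (k : nat) (Sg : 'M[R]_p) : set 'M[R]_p :=
  [set T | Cset k T /\ forall A, Cset k A -> frob (Sg - T) <= frob (Sg - A)].

Definition fobj (S Sg : 'M[R]_p) : R := ln (\det Sg) + \tr (invmx Sg *m S).

Definition hrho (k : nat) (rho : R) (S Sg : 'M[R]_p) : R :=
  fobj S Sg + rho / 2 * (distC k Sg) ^+ 2.

Definition stationary (k : nat) (rho : R) (S Sg : 'M[R]_p) : Prop :=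
  posdef Sg /\ exists T, projC k Sg T /\
    invmx Sg - invmx Sg *m S *m invmx Sg + rho *: (Sg - T) = 0.
End Defs.

From HB Require Import structures.
From mathcomp Require Import all_boot all_order all_algebra.
From mathcomp Require Import all_classical all_reals all_analysis.
From mathcomp Require Import ring lra.
Set Implicit Arguments. Unset Strict Implicit. Unset Printing Implicit Defensive.
Import Order.TTheory GRing.Theory Num.Theory.
Local Open Scope ring_scope.

(* Let D = Sghat - Sgk and let G = Sgk^-1 - Sgk^-1 S Sgk^-1 + rho (Sgk - Thk)
   be the gradient at Sgk of g = f + rho/2 ||. - Thk||^2, which majorizes h_rho
   and agrees with it at Sgk.  The Sylvester equation reads rho D + P D P = - G
   with P = Sgk^-1 positive definite.  Since tr (X^T (rho X + P X P)) is at least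
   rho ||X||^2, this operator is injective; as it commutes with transposition and
   G is symmetric, D is symmetric, D <> 0 when Sgk is not stationary, and
   tr (G D) <= - rho ||D||^2 < 0.  Writing Sgk = B^T B turns Sgk + t D into
   B^T (1 + t E) B; expanding det (1 + t E) through the characteristic
   polynomial and (1 + t E)^-1 through the resolvent identity gives
   g (Sgk + t D) <= g Sgk + t tr (G D) + K t^2, with Sgk + t D positive definite,
   for all small t > 0; so a small enough t = 2^-s decreases h_rho. *)

Section BilinearForm.
Variables (R : comPzRingType) (n : nat).
Implicit Types (A B : 'M[R]_n) (x y z : 'cV[R]_n).

Definition bform A x y : R := (x^T *m A *m y) 0 0.

Lemma bform_sym A x y : A^T = A -> bform A x y = bform A y x.
Proof.
move=> sA; rewrite /bform -[in LHS](trmxK (x^T *m A *m y)) mxE.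
by rewrite !trmx_mul trmxK sA mulmxA.
Qed.

Lemma bformDl A x y z : bform A (x + y) z = bform A x z + bform A y z.
Proof. by rewrite /bform linearD /= !mulmxDl mxE. Qed.

Lemma bformDr A x y z : bform A z (x + y) = bform A z x + bform A z y.
Proof. by rewrite /bform !mulmxDr mxE. Qed.

Lemma bformZl A a x z : bform A (a *: x) z = a * bform A x z.
Proof. by rewrite /bform linearZ /= -!scalemxAl mxE. Qed.

Lemma bformZr A a x z : bform A z (a *: x) = a * bform A z x.
Proof. by rewrite /bform -!scalemxAr mxE. Qed.

Lemma bformNl A x z : bform A (- x) z = - bform A x z.
Proof. by rewrite -scaleN1r bformZl mulN1r. Qed.

Lemma bformNr A x z : bform A z (- x) = - bform A z x.
Proof. by rewrite -scaleN1r bformZr mulN1r. Qed.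

Lemma bformD A B x z : bform (A + B) x z = bform A x z + bform B x z.
Proof. by rewrite /bform mulmxDr mulmxDl mxE. Qed.

Lemma bformZ A a x z : bform (a *: A) x z = a * bform A x z.
Proof. by rewrite /bform -scalemxAr -scalemxAl mxE. Qed.

Lemma bformN A x z : bform (- A) x z = - bform A x z.
Proof. by rewrite -scaleN1r bformZ mulN1r. Qed.

Lemma bform_delta A i j : bform A (delta_mx i 0) (delta_mx j 0) = A i j.
Proof. by rewrite /bform trmx_delta -rowE -colE !mxE. Qed.

Lemma bform_mulmx A B x y : bform (B^T *m A *m B) x y = bform A (B *m x) (B *m y).
Proof. by rewrite /bform trmx_mul !mulmxA. Qed.

End BilinearForm.

Section SquaredNorm.
Variables (R : realFieldType) (n : nat).
Implicit Types (x : 'cV[R]_n).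

Definition sqnorm x : R := \sum_i x i 0 ^+ 2.

Lemma bform1 x : bform 1%:M x x = sqnorm x.
Proof. by rewrite /bform mulmx1 mxE; apply: eq_bigr => i _; rewrite mxE expr2. Qed.

Lemma sqnorm_ge0 x : 0 <= sqnorm x.
Proof. by apply: sumr_ge0 => i _; rewrite sqr_ge0. Qed.

Lemma sqr_le_sqnorm x i : x i 0 ^+ 2 <= sqnorm x.
Proof.
by rewrite /sqnorm (bigD1 i) //= lerDl; apply: sumr_ge0 => j _; exact: sqr_ge0.
Qed.

Lemma sqnorm_eq0 x : (sqnorm x == 0) = (x == 0).
Proof.
apply/eqP/eqP => [x0|->]; last by rewrite /sqnorm big1 // => i _; rewrite mxE expr0n.
apply/matrixP => i j; rewrite (ord1 j) mxE; apply/eqP; rewrite -sqrf_eq0.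
by apply/eqP/(psumr_eq0P _ x0) => // k _; exact: sqr_ge0.
Qed.

End SquaredNorm.

Section GramDecomposition.
Variables (R : realType) (n : nat).
Implicit Types (A B : 'M[R]_n) (x : 'cV[R]_n).

Lemma psd_diag_ge0 A i : psd A -> 0 <= A i i.
Proof. by case=> _ pA; rewrite -bform_delta; exact: pA. Qed.

(* Testing [A] on [e_i + l e_j] with [l = - A i j / (A j j + 1)] gives
   [0 <= - A i j ^+ 2 * (A j j + 2) / (A j j + 1) ^+ 2]. *)
Lemma psd_diag0_row0 A i j : psd A -> A i i = 0 -> A i j = 0.
Proof.
move=> psdA Aii; have [sA pA] := psdA.
set a := A i j; set d := A j j.
have d0 : 0 <= d := psd_diag_ge0 j psdA.
have d1 : 0 < d + 1 by lra.
set l := - a / (d + 1).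
have := pA (delta_mx i 0 + l *: delta_mx j 0).
rewrite -/(bform _ _ _) !(bformDl, bformDr, bformZl, bformZr, bform_delta) -/d Aii.
have -> : A j i = a by rewrite /a -{1}sA mxE.
rewrite add0r => h.
have hl : l * (d + 1) = - a by rewrite /l mulrVK // unitfE gt_eqF.
have e : (d + 1) ^+ 2 * (l * a + (l * a + l * (l * d))) = - (a ^+ 2) * (d + 2).
  have -> : (d + 1) ^+ 2 * (l * a + (l * a + l * (l * d))) =
     2 * a * (l * (d + 1)) * (d + 1) + d * (l * (d + 1)) ^+ 2 by ring.
  by rewrite hl; ring.
have : 0 <= - (a ^+ 2) * (d + 2) by rewrite -e mulr_ge0 ?sqr_ge0.
move=> h2; apply/eqP; rewrite -sqrf_eq0 eq_le sqr_ge0 andbT; nra.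
Qed.

Lemma psd_diag0 A : psd A -> (forall i, A i i = 0) -> A = 0.
Proof.
by move=> psdA A0; apply/matrixP => i j; rewrite mxE; apply: psd_diag0_row0.
Qed.

Definition schur_compl A i := A - (A i i)^-1 *: (col i A *m (col i A)^T).

Lemma schur_complE A i j k :
  schur_compl A i j k = A j k - (A i i)^-1 * (A j i * A k i).
Proof. by rewrite !mxE big_ord1 !mxE. Qed.

Lemma psd_schur_compl A i : psd A -> 0 < A i i -> psd (schur_compl A i).
Proof.
move=> [sA pA] a0; set a := A i i; split.
  by rewrite /schur_compl linearB /= linearZ /= trmx_mul trmxK sA.
move=> x; set b := bform A x (delta_mx i 0).
have bc : bform (col i A *m (col i A)^T) x x = b ^+ 2.
  rewrite /bform -!mulmxA mulmxA mxE big_ord1.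
  have -> : (col i A)^T *m x = (x^T *m col i A)^T by rewrite trmx_mul trmxK.
  by rewrite [(_^T) 0 0]mxE colE mulmxA expr2.
have := pA (x - (b / a) *: delta_mx i 0).
rewrite -/(bform _ _ _).
rewrite !(bformDl, bformDr, bformNl, bformNr, bformZl, bformZr, bform_delta).
rewrite (bform_sym (delta_mx i 0) x sA) -/b -/a => h.
rewrite -/(bform _ _ _) /schur_compl -/a bformD bformN bformZ bc.
have e : b / a * a = b by rewrite mulrVK // unitfE gt_eqF.
have -> : a^-1 * b ^+ 2 = b / a * b by ring.
by rewrite e mulrN opprK in h; lra.
Qed.

Lemma schur_compl_pivot A i : A i i != 0 -> schur_compl A i i i = 0.
Proof. by move=> a0; rewrite schur_complE mulKf // subrr. Qed.

Lemma schur_compl_diag0 A i j : psd A -> A j j = 0 -> schur_compl A i j j = 0.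
Proof.
move=> psdA Ajj; rewrite schur_complE Ajj (psd_diag0_row0 i psdA Ajj).
by rewrite !mul0r mulr0 subr0.
Qed.

(* No cross terms appear because the [i]-th row of [B] vanishes. *)
Lemma gram_schur_update A i B : 0 < A i i ->
  schur_compl A i = B^T *m B -> row i B = 0 ->
  A = (B + delta_mx i 0 *m ((Num.sqrt (A i i))^-1 *: (col i A)^T))^T
      *m (B + delta_mx i 0 *m ((Num.sqrt (A i i))^-1 *: (col i A)^T)).
Proof.
move=> a0 eB rB; set s := Num.sqrt (A i i); set X := s^-1 *: (col i A)^T.
have ss : s ^+ 2 = A i i by rewrite sqr_sqrtr // ltW.
have r0 : (delta_mx i 0 : 'cV[R]_n)^T *m B = 0 by rewrite trmx_delta -rowE.
have r1 : B^T *m (delta_mx i 0 : 'cV[R]_n) = 0.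
  by rewrite -[delta_mx i 0]trmxK -trmx_mul r0 trmx0.
have dd : (delta_mx i 0 : 'cV[R]_n)^T *m (delta_mx i 0 : 'cV[R]_n) = 1%:M.
  rewrite trmx_delta mul_delta_mx.
  by apply/matrixP => p q; rewrite (ord1 p) (ord1 q) !mxE.
rewrite [(B + _)^T]linearD /= mulmxDl !mulmxDr -eB !trmx_mul mulmxA r1 mul0mx addr0.
rewrite -mulmxA r0 mulmx0 add0r (mulmxA (X^T *m _)) -(mulmxA X^T) dd mulmx1.
rewrite /X [(s^-1 *: _)^T]linearZ /= trmxK -scalemxAl -scalemxAr scalerA.
rewrite -invfM -expr2 ss.
by rewrite /schur_compl subrK.
Qed.

Lemma psd_gram_rows m A : psd A -> (#|[set i | A i i != 0%R]| <= m)%N ->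
  exists B, A = B^T *m B /\ forall j, A j j = 0 -> row j B = 0.
Proof.
have gram0 B : B = 0 -> exists C, B = C^T *m C /\ forall j, B j j = 0 -> row j C = 0.
  move=> ->; exists 0; rewrite trmx0 mul0mx; split => // j _.
  by apply/rowP => k; rewrite !mxE.
elim: m A => [|m IH] A psdA hcard.
  apply/gram0/psd_diag0 => // i; apply/eqP; apply: contraTT hcard => Ai.
  by rewrite -ltnNge card_gt0; apply/set0Pn; exists i; rewrite inE.
have [i /= Ai0|Adiag0] := pickP (fun i => A i i != 0); last first.
  by apply/gram0/psd_diag0 => // i; apply/eqP/negbFE/Adiag0.
have a0 : 0 < A i i by rewrite lt_def Ai0 psd_diag_ge0.
have psdA' := psd_schur_compl psdA a0.
have hcard' : (#|[set j | schur_compl A i j j != 0%R]| <= m)%N.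
  have : [set j | schur_compl A i j j != 0] \proper [set j | A j j != 0].
    apply/properP; split; last by exists i; rewrite !inE ?schur_compl_pivot ?eqxx.
    apply/fintype.subsetP => j; rewrite !inE; apply: contra => /eqP Ajj.
    by rewrite schur_compl_diag0.
  by move/proper_card => h; rewrite -ltnS (leq_trans h hcard).
have [B [eB rB]] := IH _ psdA' hcard'.
eexists; split; first exact: gram_schur_update a0 eB (rB i (schur_compl_pivot Ai0)).
move=> j Ajj; rewrite linearD /= row_mul (rB j (schur_compl_diag0 i psdA Ajj)) add0r.
have -> : row j (delta_mx i 0 : 'cV[R]_n) = 0.
  apply/matrixP => p q; rewrite !mxE; case: eqP => // ji.
  by move: Ai0; rewrite -ji Ajj eqxx.
by rewrite mul0mx.
Qed.

Lemma psd_gram A : psd A -> exists B, A = B^T *m B.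
Proof. by move=> psdA; have [B [eB _]] := psd_gram_rows psdA (leqnn _); exists B. Qed.

End GramDecomposition.

Section PositiveDefinite.
Variables (R : realType) (n : nat).
Implicit Types (A B M : 'M[R]_n) (x : 'cV[R]_n).

Lemma posdef_psd A : posdef A -> psd A.
Proof.
case=> sA pA; split=> // x; have [->|x0] := eqVneq x 0; last exact/ltW/pA.
by rewrite mulmx0 mxE.
Qed.

Lemma posdef_unitmx A : posdef A -> A \in unitmx.
Proof.
case=> _ pA; rewrite unitmxE unitfE; apply/negP => /det0P [v v0 vA].
by have := pA v^T; rewrite trmx_eq0 trmxK vA mul0mx mxE ltxx => /(_ v0).
Qed.

Lemma posdef_inv A : posdef A -> posdef (invmx A).
Proof.
move=> pdA; have uA := posdef_unitmx pdA; case: pdA => sA pA.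
split; first by rewrite trmx_inv sA.
move=> x x0; set y := invmx A *m x.
have ex : x = A *m y by rewrite /y mulKVmx.
have y0 : y != 0 by apply: contraNneq x0 => y0; rewrite ex y0 mulmx0.
by rewrite ex trmx_mul sA -!mulmxA (mulmxA (invmx A)) mulVmx // mul1mx mulmxA pA.
Qed.

Lemma posdef_gram A : posdef A -> exists2 B, A = B^T *m B & B \in unitmx.
Proof.
move=> pdA; have [B eB] := psd_gram (posdef_psd pdA).
by exists B => //; have := posdef_unitmx pdA; rewrite eB unitmx_mul unitmx_tr andbb.
Qed.

Lemma det_gram_gt0 B : B \in unitmx -> 0 < \det (B^T *m B).
Proof.
move=> uB; rewrite det_mulmx det_tr -expr2 lt_def sqr_ge0 andbT sqrf_eq0.
by rewrite -unitfE -unitmxE.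
Qed.

Lemma det_posdef_gt0 A : posdef A -> 0 < \det A.
Proof. by move=> /posdef_gram[B -> /det_gram_gt0]. Qed.

Lemma posdef_mulmx B M : B \in unitmx -> posdef M -> posdef (B^T *m M *m B).
Proof.
move=> uB [sM pM]; split; first by rewrite !trmx_mul trmxK sM mulmxA.
move=> x x0; rewrite -/(bform _ _ _) bform_mulmx; apply: pM.
by apply: contraNneq x0 => Bx0; rewrite -(mulKmx uB x) Bx0 mulmx0.
Qed.

Lemma posdef_coercive M : M^T = M ->
  (forall x, sqnorm x / 2 <= bform M x x) -> posdef M.
Proof.
move=> sM hM; split=> // x x0; apply: lt_le_trans (hM x).
by rewrite divr_gt0 // lt_def sqnorm_eq0 x0 sqnorm_ge0.
Qed.

End PositiveDefinite.

Section IdentityPerturbation.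
Variables (R : realFieldType) (n : nat).
Implicit Types (E M X Z : 'M[R]_n) (u : 'cV[R]_n).

Definition l1norm E : R := \sum_i \sum_j `|E i j|.

Lemma l1norm_ge0 E : 0 <= l1norm E.
Proof. by apply: sumr_ge0 => i _; apply: sumr_ge0. Qed.

Lemma abs_bform_le E u : `|bform E u u| <= l1norm E * sqnorm u.
Proof.
have bformE : bform E u u = \sum_k \sum_j u j 0 * E j k * u k 0.
  rewrite /bform mxE; apply: eq_bigr => k _; rewrite mxE mulr_suml.
  by apply: eq_bigr => j _; rewrite mxE.
rewrite bformE /l1norm exchange_big mulr_suml.
apply: le_trans (ler_norm_sum _ _ _) _; apply: ler_sum => k _.
rewrite mulr_suml; apply: le_trans (ler_norm_sum _ _ _) _; apply: ler_sum => j _.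
rewrite mulrAC normrM mulrC ler_wpM2l // normrM.
have := sqr_le_sqnorm u j; have := sqr_le_sqnorm u k.
rewrite -[u j 0 ^+ 2]real_normK ?num_real // -[u k 0 ^+ 2]real_normK ?num_real //.
by have := sqr_ge0 (`|u j 0| - `|u k 0|); nra.
Qed.

Lemma abs_mxtrace_mul_le Z X b :
  (forall i j, `|Z i j| <= b) -> `|\tr (Z *m X)| <= b * l1norm X.
Proof.
move=> Zb; apply: le_trans (ler_norm_sum _ _ _) _.
rewrite /l1norm exchange_big mulr_sumr; apply: ler_sum => i _; rewrite mxE.
apply: le_trans (ler_norm_sum _ _ _) _.
rewrite mulr_sumr; apply: ler_sum => j _.
by rewrite normrM mulrC [b * _]mulrC ler_wpM2l.
Qed.

Lemma bform_1addZ_ge E t : 0 <= t -> t * l1norm E <= 1 / 2 ->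
  forall u, sqnorm u / 2 <= bform (1%:M + t *: E) u u.
Proof.
move=> t0 tE u; rewrite bformD bformZ bform1.
have := abs_bform_le E u; rewrite ler_norml => /andP[hE _].
have := sqnorm_ge0 u; have := l1norm_ge0 E.
have : t * (- (l1norm E * sqnorm u)) <= t * bform E u u by rewrite ler_wpM2l.
nra.
Qed.

Lemma unitmx_coercive M : (forall u, sqnorm u / 2 <= bform M u u) -> M \in unitmx.
Proof.
move=> hM; rewrite unitmxE unitfE; apply/negP => /det0P [v v0 vM].
have := hM v^T; rewrite /bform trmxK vM mul0mx mxE => h.
have : sqnorm v^T == 0 by rewrite eq_le sqnorm_ge0 andbT; lra.
by rewrite sqnorm_eq0 trmx_eq0 (negbTE v0).
Qed.

(* The [j]-th column [z] of [invmx M] satisfies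
   [sqnorm z / 2 <= bform M z z = z j 0]. *)
Lemma invmx_coercive_le M : (forall u, sqnorm u / 2 <= bform M u u) ->
  forall i j, `|invmx M i j| <= 2.
Proof.
move=> hM i j; set z := invmx M *m (delta_mx j 0 : 'cV[R]_n).
have Mz : M *m z = delta_mx j 0 by rewrite /z mulKVmx // unitmx_coercive.
have -> : invmx M i j = z i 0 by rewrite /z -colE mxE.
clearbody z; have := hM z; rewrite /bform -mulmxA Mz -colE !mxE => hz.
have := sqr_le_sqnorm z j; have := sqr_le_sqnorm z i; have := sqnorm_ge0 z.
move=> s0 hi hj; have zj : z j 0 <= 2 by nra.
have zi : z i 0 ^+ 2 <= 4 by nra.
by rewrite ler_norml; apply/andP; split; nra.
Qed.

End IdentityPerturbation.

Lemma mxtrace_inv_1addZ (R : comUnitRingType) n (E X : 'M[R]_n) t :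
  1%:M + t *: E \in unitmx ->
  \tr (invmx (1%:M + t *: E) *m X) =
    \tr X - t * \tr (E *m X) + t ^+ 2 * \tr (invmx (1%:M + t *: E) *m (X *m E *m E)).
Proof.
set Z := invmx _ => uM.
have eZ : Z = 1%:M - t *: (E *m Z).
  have := mulmxV uM; rewrite -/Z mulmxDl mul1mx -scalemxAl => <-.
  by rewrite addrK.
rewrite {1}eZ mulmxBl mul1mx raddfB /= -scalemxAl mxtraceZ.
rewrite {1}eZ mulmxBr mulmx1 mulmxBl raddfB /= -scalemxAr -scalemxAl mxtraceZ.
have -> : \tr (E *m (E *m Z) *m X) = \tr (Z *m (X *m E *m E)).
  by rewrite !mulmxA -(mulmxA (E *m E)) mxtrace_mulC !mulmxA.
ring.
Qed.

Lemma horner_char_poly (R : comNzRingType) n (A : 'M[R]_n) x :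
  (char_poly A).[x] = \det (x%:M - A).
Proof.
rewrite -horner_evalE /char_poly -det_map_mx; congr (\det _).
apply/matrixP => i j; rewrite !mxE /= horner_evalE.
by rewrite hornerD hornerN hornerMn hornerX hornerC.
Qed.

(* [\det (1%:M + t *: E)] is the reversed characteristic polynomial of [- E]
   evaluated at [t]; its two lowest coefficients are [1] and [\tr E]. *)
Lemma det_1addZ_expansion (R : realFieldType) n (E : 'M[R]_n) :
  exists2 c : R, 0 <= c & forall t, 0 < t -> t <= 1 ->
    `|\det (1%:M + t *: E) - (1 + t * \tr E)| <= c * t ^+ 2.
Proof.
case: n E => [|n] E.
  exists 0 => // t _ _.
  by rewrite det_mx00 [\tr E]big_ord0 mulr0 addr0 subrr normr0 mul0r.
set c := char_poly (- E); exists (\sum_(i < n) `|c`_i|) => [|t t0 t1].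
  by apply: sumr_ge0.
have tn0 : t != 0 by rewrite gt_eqF.
have ctop : c`_n.+1 = 1.
  by have /monicP := char_poly_monic (- E); rewrite /lead_coef size_char_poly.
have ctr : c`_n = \tr E by rewrite (char_poly_trace (- E)) // linearN opprK.
have tX i : (i <= n.+1)%N -> t ^+ n.+1 * t^-1 ^+ i = t ^+ (n.+1 - i).
  move=> ni; rewrite -{1}(subnK ni) exprD exprVn -mulrA mulfV ?mulr1 //.
  exact: expf_neq0.
have -> : \det (1%:M + t *: E) - (1 + t * \tr E) = \sum_(i < n) c`_i * t ^+ (n.+1 - i).
  have -> : 1%:M + t *: E = t *: (t^-1%:M - (- E)).
    by rewrite opprK scalerDr scale_scalar_mx mulfV.
  rewrite detZ -horner_char_poly horner_coef size_char_poly -/c.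
  rewrite big_ord_recr big_ord_recr /= ctop ctr mul1r !mulrDr tX // subnn expr0.
  rewrite mulrCA tX // subSnn expr1 mulr_sumr.
  have -> : \sum_(i < n) t ^+ n.+1 * (c`_i * t^-1 ^+ i) =
            \sum_(i < n) c`_i * t ^+ (n.+1 - i).
    by apply: eq_bigr => i _; rewrite mulrCA tX // ltnW // ltnW // ltnS.
  ring.
apply: le_trans (ler_norm_sum _ _ _) _; rewrite mulr_suml; apply: ler_sum => i _.
have t0' : 0 <= t := ltW t0.
rewrite normrM ler_wpM2l // ger0_norm ?exprn_ge0 //.
have i2 : (2 <= n.+1 - i)%N by rewrite subSn ?ltnS ?subn_gt0 // ltnW.
by rewrite -(subnK i2) exprD -[leRHS]mul1r ler_wpM2r ?exprn_ge0 ?exprn_ile1.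
Qed.

Section Frobenius.
Variables (R : realType) (n : nat).
Implicit Types (X D : 'M[R]_n).

Lemma frob2_tr X : frob2 X = \tr (X^T *m X).
Proof.
rewrite /frob2 /mxtrace exchange_big; apply: eq_bigr => i _; rewrite mxE.
by apply: eq_bigr => j _; rewrite mxE expr2.
Qed.

Lemma frob2_ge0 X : 0 <= frob2 X.
Proof. by apply: sumr_ge0 => i _; apply: sumr_ge0 => j _; exact: sqr_ge0. Qed.

Lemma frob2_eq0 X : (frob2 X == 0) = (X == 0).
Proof.
apply/eqP/eqP => [X0|->]; last first.
  by rewrite /frob2 big1 // => i _; rewrite big1 // => j _; rewrite mxE expr0n.
apply/matrixP => i j; rewrite mxE; apply/eqP; rewrite -sqrf_eq0; apply/eqP.
have Xi : \sum_j X i j ^+ 2 = 0.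
  by apply: (psumr_eq0P _ X0) => // k _; apply: sumr_ge0 => l _; exact: sqr_ge0.
by apply: (psumr_eq0P _ Xi) => // k _; exact: sqr_ge0.
Qed.

Lemma sqr_frob X : frob X ^+ 2 = frob2 X.
Proof. by rewrite /frob sqr_sqrtr // frob2_ge0. Qed.

Lemma frob2_line X D t :
  frob2 (X + t *: D) = frob2 X + 2 * t * \tr (X^T *m D) + t ^+ 2 * frob2 D.
Proof.
rewrite !frob2_tr [(_ + _)^T]linearD /= [(t *: _)^T]linearZ /=.
rewrite mulmxDl !mulmxDr -!scalemxAl -!scalemxAr !mxtraceD !mxtraceZ.
have -> : \tr (D^T *m X) = \tr (X^T *m D) by rewrite -mxtrace_tr trmx_mul trmxK.
by rewrite expr2; ring.
Qed.

End Frobenius.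

Section DistanceToC.
Variables (R : realType) (n k : nat).
Implicit Types (S Sg T : 'M[R]_n) (rho : R).

Lemma distC_le Sg T : Cset k T -> distC k Sg <= frob (Sg - T).
Proof.
move=> CT; apply: ge_inf; last by exists T.
by exists 0 => _ [A _ <-]; exact: sqrtr_ge0.
Qed.

Lemma distC_ge0 Sg T : Cset k T -> 0 <= distC k Sg.
Proof.
move=> CT; apply: lb_le_inf; first by exists (frob (Sg - T)), T.
by move=> _ [A _ <-]; exact: sqrtr_ge0.
Qed.

Lemma distC_proj Sg T : projC k Sg T -> distC k Sg = frob (Sg - T).
Proof.
case=> CT minT; apply/eqP; rewrite eq_le distC_le //=.
apply: lb_le_inf; first by exists (frob (Sg - T)), T.
by move=> _ [A CA <-]; exact: minT.
Qed.

Lemma hrho_proj rho S Sg T : projC k Sg T ->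
  hrho k rho S Sg = fobj S Sg + rho / 2 * frob2 (Sg - T).
Proof. by move=> /distC_proj dE; rewrite /hrho dE sqr_frob. Qed.

Lemma hrho_le rho S Sg T : 0 <= rho -> Cset k T ->
  hrho k rho S Sg <= fobj S Sg + rho / 2 * frob2 (Sg - T).
Proof.
move=> rho0 CT; rewrite /hrho lerD2l ler_wpM2l ?divr_ge0 // -sqr_frob.
by rewrite ler_sqr ?nnegrE ?distC_le ?(distC_ge0 Sg CT) ?sqrtr_ge0.
Qed.

End DistanceToC.

Section Sylvester.
Variables (R : realType) (n : nat).
Implicit Types (rho : R) (C P X G : 'M[R]_n).

Definition sylvester rho P X := rho *: X + P *m X *m P.

Lemma sylvesterB rho P X Y :
  sylvester rho P (X - Y) = sylvester rho P X - sylvester rho P Y.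
Proof. by rewrite /sylvester scalerBr mulmxBr mulmxBl addrACA opprD. Qed.

Lemma trmx_sylvester rho P X : P^T = P -> (sylvester rho P X)^T = sylvester rho P X^T.
Proof. by move=> sP; rewrite linearD /= linearZ /= !trmx_mul sP mulmxA. Qed.

(* [tr (X^T P X P) = tr (Y Y^T)] with [Y = C X C^T] when [P = C^T C]. *)
Lemma mxtrace_gram_quad_ge0 C X : 0 <= \tr (X^T *m (C^T *m C) *m X *m (C^T *m C)).
Proof.
have -> : X^T *m (C^T *m C) *m X *m (C^T *m C) = (X^T *m C^T) *m (C *m X *m C^T *m C).
  by rewrite !mulmxA.
rewrite mxtrace_mulC.
have -> : C *m X *m C^T *m C *m (X^T *m C^T) = (C *m X *m C^T) *m (C *m X *m C^T)^T.
  by rewrite !trmx_mul trmxK !mulmxA.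
by rewrite mxtrace_mulC -frob2_tr frob2_ge0.
Qed.

Lemma frob2_le_sylvester rho P X : psd P ->
  rho * frob2 X <= \tr (X^T *m sylvester rho P X).
Proof.
move=> /psd_gram[C ->]; rewrite /sylvester mulmxDr -scalemxAr mxtraceD mxtraceZ.
rewrite frob2_tr lerDl.
by have := mxtrace_gram_quad_ge0 C X; rewrite !mulmxA.
Qed.

Lemma sylvester_eq0 rho P X : 0 < rho -> psd P -> sylvester rho P X = 0 -> X = 0.
Proof.
move=> rho0 psdP X0; have := frob2_le_sylvester rho X psdP.
rewrite X0 mulmx0 mxtrace0 pmulr_rle0 // => X0'.
by apply/eqP; rewrite -frob2_eq0 eq_le X0' frob2_ge0.
Qed.

Lemma sylvester_sym rho P X G : 0 < rho -> psd P -> G^T = G ->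
  sylvester rho P X = G -> X^T = X.
Proof.
move=> rho0 psdP sG XG; apply/esym/eqP; rewrite -subr_eq0; apply/eqP.
apply: (sylvester_eq0 rho0 psdP).
by rewrite sylvesterB -trmx_sylvester ?(proj1 psdP) // XG sG subrr.
Qed.

Lemma sylvester_descent rho P X G : 0 < rho -> psd P -> X^T = X -> X != 0 ->
  sylvester rho P X = - G -> \tr (G *m X) < 0.
Proof.
move=> rho0 psdP sX X0 XG; have := frob2_le_sylvester rho X psdP.
rewrite XG sX mulmxN raddfN /= mxtrace_mulC => h.
have : 0 < rho * frob2 X by rewrite mulr_gt0 // lt_def frob2_eq0 X0 frob2_ge0.
by move=> /lt_le_trans /(_ h); rewrite oppr_gt0.
Qed.

End Sylvester.

Section Gradient.
Variables (R : realType) (n : nat).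
Implicit Types (rho : R) (S Sg Th Sh : 'M[R]_n).

Definition hgrad rho S Sg Th :=
  invmx Sg - invmx Sg *m S *m invmx Sg + rho *: (Sg - Th).

Lemma trmx_hgrad rho S Sg Th : S^T = S -> Sg^T = Sg -> Th^T = Th ->
  (hgrad rho S Sg Th)^T = hgrad rho S Sg Th.
Proof.
move=> sS sSg sTh; rewrite !linearD !linearN /= !linearZ /= !trmx_mul trmx_inv.
by rewrite sS sSg sTh mulmxA /hgrad scalerBr scalerN.
Qed.

Lemma sylvester_hgrad rho S Sg Th Sh : Sg \in unitmx ->
  rho *: Sh + invmx Sg *m Sh *m invmx Sg = rho *: Th + invmx Sg *m S *m invmx Sg ->
  sylvester rho (invmx Sg) (Sh - Sg) = - hgrad rho S Sg Th.
Proof.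
move=> uSg eSh; have SgK : invmx Sg *m Sg *m invmx Sg = invmx Sg.
  by rewrite mulVmx // mul1mx.
rewrite /sylvester /hgrad !scalerBr mulmxBr mulmxBl SgK addrACA eSh.
move: (rho *: Th) (rho *: Sg) (invmx Sg) (invmx Sg *m S *m invmx Sg) => a b c d.
by apply/matrixP => i j; rewrite !mxE; ring.
Qed.

End Gradient.

Lemma invmx_mulmx (R : comUnitRingType) n (A B : 'M[R]_n) :
  A \in unitmx -> B \in unitmx -> invmx (A *m B) = invmx B *m invmx A.
Proof.
move=> uA uB; have h : A *m B *m (invmx B *m invmx A) = 1%:M.
  by rewrite mulmxA mulmxK // mulmxV.
by rewrite -[LHS]mulmx1 -h mulmxA mulVmx ?mul1mx // unitmx_mul uA uB.
Qed.

Section GramLine.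
Variables (R : realType) (n : nat) (A B D : 'M[R]_n).
Hypotheses (eA : A = B^T *m B) (uB : B \in unitmx).
Let Bi := invmx B.
Let E := Bi^T *m D *m Bi.

Lemma invmx_gram : invmx A = Bi *m Bi^T.
Proof. by rewrite eA invmx_mulmx ?unitmx_tr // trmx_inv. Qed.

Lemma mxtrace_invmx_gram X : \tr (invmx A *m X) = \tr (Bi^T *m X *m Bi).
Proof. by rewrite invmx_gram -mulmxA mxtrace_mulC. Qed.

Lemma gram_line t : A + t *: D = B^T *m (1%:M + t *: E) *m B.
Proof.
have BBi : B^T *m Bi^T = 1%:M by rewrite -trmx_mul mulVmx // trmx1.
rewrite mulmxDr mulmx1 mulmxDl -eA /E -scalemxAr -scalemxAl !mulmxA BBi mul1mx.
by rewrite -mulmxA mulVmx // mulmx1.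
Qed.

Lemma posdef_gram_line t : D^T = D -> 0 <= t -> t * l1norm E <= 1 / 2 ->
  posdef (A + t *: D).
Proof.
move=> sD t0 tE; rewrite gram_line; apply: posdef_mulmx uB _.
apply: posdef_coercive (bform_1addZ_ge t0 tE).
by rewrite linearD /= linearZ /= trmx1 /E !trmx_mul trmxK sD mulmxA.
Qed.

Lemma ln_det_gram_line_le : exists2 c : R, 0 <= c & forall t, 0 < t -> t <= 1 ->
  posdef (A + t *: D) ->
  ln (\det (A + t *: D)) <= ln (\det A) + t * \tr (invmx A *m D) + c * t ^+ 2.
Proof.
have [c c0 hc] := det_1addZ_expansion E; exists c => // t t0 t1 pdAt.
have dA : 0 < \det A by rewrite eA det_gram_gt0.
have ddet : \det (A + t *: D) = \det A * \det (1%:M + t *: E).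
  by rewrite gram_line eA !det_mulmx mulrAC.
have dM : 0 < \det (1%:M + t *: E).
  by have := det_posdef_gt0 pdAt; rewrite ddet pmulr_rgt0.
rewrite ddet lnM ?posrE // -addrA lerD2l mxtrace_invmx_gram -/E.
have := @le_ln1Dx R (\det (1%:M + t *: E) - 1); rewrite addrCA subrr addr0.
have := hc t t0 t1; rewrite ler_norml => /andP[_ h] hln; apply: le_trans (hln _) _; lra.
Qed.

Lemma mxtrace_invmx_gram_line_le S : exists2 c : R, 0 <= c &
  forall t, 0 <= t -> t * l1norm E <= 1 / 2 ->
  \tr (invmx (A + t *: D) *m S) <=
    \tr (invmx A *m S) - t * \tr (invmx A *m S *m invmx A *m D) + c * t ^+ 2.
Proof.
set S' := Bi^T *m S *m Bi.
exists (2 * l1norm (S' *m E *m E)) => [|t t0 tE]; first by rewrite mulr_ge0 ?l1norm_ge0.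
have coerc := bform_1addZ_ge t0 tE; have uM := unitmx_coercive coerc.
have -> : \tr (invmx (A + t *: D) *m S) = \tr (invmx (1%:M + t *: E) *m S').
  rewrite gram_line !invmx_mulmx ?unitmx_mul ?unitmx_tr ?uM ?uB // -trmx_inv.
  by rewrite -!mulmxA mxtrace_mulC /S' !mulmxA.
have -> : \tr (invmx A *m S *m invmx A *m D) = \tr (E *m S').
  rewrite [RHS]mxtrace_mulC -!mulmxA mxtrace_invmx_gram invmx_gram.
  by rewrite /E /S' !mulmxA.
rewrite mxtrace_inv_1addZ // mxtrace_invmx_gram -/S' lerD2l.
have := abs_mxtrace_mul_le (S' *m E *m E) (invmx_coercive_le coerc).
by rewrite ler_norml => /andP[_ h]; rewrite mulrC ler_wpM2r ?sqr_ge0.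
Qed.

End GramLine.

Section LineSearch.
Variables (R : realType) (n : nat).
Implicit Types (S A T D : 'M[R]_n).

Lemma fobj_line_le S A D : posdef A -> D^T = D ->
  exists2 K : R, 0 < K & forall t, 0 < t -> t * K <= 1 ->
    posdef (A + t *: D) /\
    fobj S (A + t *: D) <=
      fobj S A + t * \tr ((invmx A - invmx A *m S *m invmx A) *m D) + K * t ^+ 2.
Proof.
move=> pdA sD; have [B eA uB] := posdef_gram pdA.
set E := (invmx B)^T *m D *m invmx B.
have [c1 c10 hdet] := ln_det_gram_line_le D eA uB.
have [c2 c20 htr] := mxtrace_invmx_gram_line_le D eA uB S.
have E0 := l1norm_ge0 E.
exists (1 + 2 * l1norm E + c1 + c2) => [|t t0 tK]; first lra.
have t1 : t <= 1 by nra.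
have tE : t * l1norm E <= 1 / 2 by nra.
have pdAt := posdef_gram_line eA uB sD (ltW t0) tE.
split=> //; rewrite /fobj mulmxBl raddfB /=.
have := hdet t t0 t1 pdAt; have := htr t (ltW t0) tE.
have : (c1 + c2) * t ^+ 2 <= (1 + 2 * l1norm E + c1 + c2) * t ^+ 2.
  by rewrite ler_wpM2r ?sqr_ge0 //; lra.
lra.
Qed.

Lemma hrho_line_le k rho S A T D : 0 < rho -> posdef A -> projC k A T -> D^T = D ->
  exists2 K : R, 0 < K & forall t, 0 < t -> t * K <= 1 ->
    posdef (A + t *: D) /\
    hrho k rho S (A + t *: D) <=
      hrho k rho S A + t * \tr (hgrad rho S A T *m D) + K * t ^+ 2.
Proof.
move=> rho0 pdA projT sD; have [K K0 hK] := fobj_line_le S pdA sD.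
have F0 : 0 <= rho / 2 * frob2 D by rewrite mulr_ge0 ?divr_ge0 ?frob2_ge0 ?ltW.
exists (K + rho / 2 * frob2 D) => [|t t0 tK]; first lra.
have [|pdAt hf] := hK t t0; first by apply: le_trans tK; rewrite ler_pM2l // lerDl.
split=> //; apply: le_trans (hrho_le S _ (ltW rho0) (proj1 projT)) _.
have sAT : (A - T)^T = A - T by rewrite linearB /= (proj1 pdA) (proj1 (proj1 projT)).
have -> : \tr (hgrad rho S A T *m D) =
    \tr ((invmx A - invmx A *m S *m invmx A) *m D) + rho * \tr ((A - T) *m D).
  by rewrite /hgrad mulmxDl mxtraceD -scalemxAl mxtraceZ.
rewrite (hrho_proj rho S projT) [A + _ - _]addrAC frob2_line sAT; nra.
Qed.

End LineSearch.

Lemma exists_halving_lt (R : archiNumFieldType) (e : R) :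
  0 < e -> exists s : nat, 2%:R ^- s < e.
Proof.
move=> e0; exists (Num.Def.archi_bound e^-1).
rewrite -invf_plt ?posrE ?exprn_gt0 //.
apply: lt_le_trans (archi_boundP _) _; first by rewrite invr_ge0 ltW.
by rewrite -natrX ler_nat ltnW // ltn_expl.
Qed.

Unset Implicit Arguments.
Set Strict Implicit.

Theorem proposition2 (R : realType) (p : nat) (S : 'M[R]_p) (rho : R) (k : nat)
  (Sgk Thk Sghat : 'M[R]_p) :
  (2 <= p)%N -> psd S -> 0 < rho -> (k <= 'C(p, 2))%N ->
  posdef Sgk -> projC k Sgk Thk ->
  rho *: Sghat + invmx Sgk *m Sghat *m invmx Sgk
    = rho *: Thk + invmx Sgk *m S *m invmx Sgk ->
  ~ stationary k rho S Sgk ->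
  exists s : nat,
    let Sgk1 := Sgk + (2%:R ^- s) *: (Sghat - Sgk) in
    posdef Sgk1 /\ hrho k rho S Sgk1 < hrho k rho S Sgk.
Proof.
move=> _ psdS rho0 _ pdA projT eSh nstat.
set D := Sghat - Sgk; set G := hgrad rho S Sgk Thk.
have psdAi : psd (invmx Sgk) := posdef_psd (posdef_inv pdA).
have eD : sylvester rho (invmx Sgk) D = - G.
  exact: sylvester_hgrad (posdef_unitmx pdA) eSh.
have sD : D^T = D.
  apply: sylvester_sym rho0 psdAi _ eD.
  by rewrite linearN /= trmx_hgrad ?(proj1 psdS) ?(proj1 pdA) ?(proj1 (proj1 projT)).
have G0 : G != 0 by apply/eqP => G0; apply: nstat; split=> //; exists Thk.
have D0 : D != 0.
  apply: contraNneq G0 => D0; rewrite -oppr_eq0 -eD D0.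
  by rewrite /sylvester scaler0 mulmx0 mul0mx addr0.
have L0 : \tr (G *m D) < 0 := sylvester_descent rho0 psdAi sD D0 eD.
have [K K0 hK] := hrho_line_le S rho0 pdA projT sD.
have [s hs] : exists s : nat, 2%:R ^- s < Num.min 1 (- \tr (G *m D)) / K.
  by apply: exists_halving_lt; rewrite divr_gt0 // lt_min ltr01 oppr_gt0.
exists s; set t := 2%:R ^- s.
have t0 : 0 < t by rewrite invr_gt0 exprn_gt0.
have : t * K < Num.min 1 (- \tr (G *m D)) by rewrite -ltr_pdivlMr.
rewrite lt_min => /andP[tK tL].
have [pdAt hdec] := hK t t0 (ltW tK).
split=> //; apply: le_lt_trans hdec _; nra.
Qed.
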